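(* Let $\mathcal C$ be a pointed category with finite coproducts, $F\colon\mathcal C\to Ab$ a reduced functor and $X\in\mathcal C$. Then $$T_2F(X)=F(X)\Big/\Big\{\big(\nabla^3_*-(\nabla^2r_{12})_*-(\nabla^2r_{13})_*-(\nabla^2r_{23})_*+r_{1*}+r_{2*}+r_{3*}\big)(x)\ :\ x\in F(X\vee X\vee X)\Big\},$$ where $g_*=F(g)$.
   Context: - $\nabla^n\colon X^{\vee n}\to X$ is the folding map. - $r_k\colon X\vee X\vee X\to X$ is the retraction onto the $k$-th summand. - $r_{jk}\colon X\vee X\vee X\to X\vee X$ ($j<k$) maps the $j$-th and $k$-th summands identically onto the first and second summand and the remaining summand to $0$. - For a reduced $F$: $cr_2F(X,Y)=\ker(F(X\vee Y)\to F(X)\oplus F(Y))$ and $cr_3F(X,Y,Z)=cr_2(cr_2F(-,Z))(X,Y)$, a subgroup of $F(X\vee Y\vee Z)$. - $T_2F(X)$ is defined as the cokernel of $cr_3F(X,X,X)\subseteq F(X^{\vee3})\xrightarrow{F(\nabla^3)}F(X)$. *)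

From HB Require Import structures.
From mathcomp Require Import all_boot all_algebra.
Set Implicit Arguments. Unset Strict Implicit. Unset Printing Implicit Defensive.
Import GRing.Theory.
Local Open Scope ring_scope.

Record PCat := {
  Ob : Type;
  Hom : Ob -> Ob -> Type;
  idm : forall A, Hom A A;
  comp : forall A B C, Hom B C -> Hom A B -> Hom A C;
  compA : forall A B C D (h : Hom C D) (g : Hom B C) (f : Hom A B),
      comp h (comp g f) = comp (comp h g) f;
  comp_idl : forall A B (f : Hom A B), comp (idm B) f = f;
  comp_idr : forall A B (f : Hom A B), comp f (idm A) = f;
  zobj : Ob;
  from_z : forall A, Hom zobj A;
  to_z : forall A, Hom A zobj;
  from_z_uniq : forall A (f : Hom zobj A), f = from_z A;
  to_z_uniq : forall A (f : Hom A zobj), f = to_z A;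
  cop : Ob -> Ob -> Ob;
  inl : forall A B, Hom A (cop A B);
  inr : forall A B, Hom B (cop A B);
  copair : forall A B C, Hom A C -> Hom B C -> Hom (cop A B) C;
  copair_inl : forall A B C (f : Hom A C) (g : Hom B C), comp (copair f g) (inl A B) = f;
  copair_inr : forall A B C (f : Hom A C) (g : Hom B C), comp (copair f g) (inr A B) = g;
  copair_uniq : forall A B C (f : Hom A C) (g : Hom B C) (h : Hom (cop A B) C),
      comp h (inl A B) = f -> comp h (inr A B) = g -> h = copair f g
}.

Arguments Hom : clear implicits.
Arguments idm {p} A.
Arguments comp {p A B C}.
Arguments zobj {p}.
Arguments from_z {p} A.
Arguments to_z {p} A.
Arguments cop {p}.
Arguments inl {p} A B.
Arguments inr {p} A B.
Arguments copair {p A B C}.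

Section Cat.
Variable C : PCat.

Definition zm (A B : Ob C) : Hom C A B := comp (from_z B) (to_z A).

Definition copmap A B A' B' (f : Hom C A A') (g : Hom C B B') : Hom C (cop A B) (cop A' B') :=
  copair (comp (inl A' B') f) (comp (inr A' B') g).

Definition ret1 (A B : Ob C) : Hom C (cop A B) A := copair (idm A) (zm B A).
Definition ret2 (A B : Ob C) : Hom C (cop A B) B := copair (zm A B) (idm B).

(* X \/ X \/ X is taken to be (X \/ X) \/ X *)
Definition X3 (X : Ob C) : Ob C := cop (cop X X) X.
Definition fold2 (X : Ob C) : Hom C (cop X X) X := copair (idm X) (idm X).
Definition fold3 (X : Ob C) : Hom C (X3 X) X := copair (fold2 X) (idm X).
Definition r_1 (X : Ob C) : Hom C (X3 X) X := copair (copair (idm X) (zm X X)) (zm X X).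
Definition r_2 (X : Ob C) : Hom C (X3 X) X := copair (copair (zm X X) (idm X)) (zm X X).
Definition r_3 (X : Ob C) : Hom C (X3 X) X := copair (copair (zm X X) (zm X X)) (idm X).
Definition r_12 (X : Ob C) : Hom C (X3 X) (cop X X) :=
  copair (copair (inl X X) (inr X X)) (zm X (cop X X)).
Definition r_13 (X : Ob C) : Hom C (X3 X) (cop X X) :=
  copair (copair (inl X X) (zm X (cop X X))) (inr X X).
Definition r_23 (X : Ob C) : Hom C (X3 X) (cop X X) :=
  copair (copair (zm X (cop X X)) (inl X X)) (inr X X).
End Cat.

Record AbFunctor (C : PCat) := {
  Fob : Ob C -> zmodType;
  Fmap : forall A B, Hom C A B -> Fob A -> Fob B;
  Fmap_sub : forall A B (f : Hom C A B) (x y : Fob A),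
      Fmap f (x - y) = Fmap f x - Fmap f y;
  Fmap_id : forall A (x : Fob A), Fmap (idm A) x = x;
  Fmap_comp : forall A B D (g : Hom C B D) (f : Hom C A B) (x : Fob A),
      Fmap (comp g f) x = Fmap g (Fmap f x)
}.

Arguments Fob {C}.
Arguments Fmap {C} a {A B}.

Section Cross.
Variables (C : PCat) (F : AbFunctor C).

Definition reduced : Prop := forall x : Fob F zobj, x = 0.

(* cr_2F(A,B) = ker(F(A \/ B) -> F(A) (+) F(B)) as a predicate on F(A \/ B) *)
Definition cr2 (A B : Ob C) (x : Fob F (cop A B)) : Prop :=
  Fmap F (ret1 A B) x = 0 /\ Fmap F (ret2 A B) x = 0.

(* cr_3F(X,Y,Z) = cr_2(cr_2F(-,Z))(X,Y), a subgroup of F((X \/ Y) \/ Z):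
   x lies in cr_2F(X\/Y, Z) and is killed by G(r1) = F(r1 \/ id_Z), G(r2) = F(r2 \/ id_Z),
   where G = cr_2F(-,Z). *)
Definition cr3 (X Y Z : Ob C) (x : Fob F (cop (cop X Y) Z)) : Prop :=
  @cr2 (cop X Y) Z x /\
  Fmap F (copmap (ret1 X Y) (idm Z)) x = 0 /\
  Fmap F (copmap (ret2 X Y) (idm Z)) x = 0.

(* The subgroup F(nabla^3)(cr_3F(X,X,X)) of F(X); T_2F(X) is F(X) modulo it. *)
Definition T2_rel (X : Ob C) (y : Fob F X) : Prop :=
  exists x : Fob F (X3 X), @cr3 X X X x /\ y = Fmap F (fold3 X) x.

Definition alt_map (X : Ob C) (x : Fob F (X3 X)) : Fob F X :=
  Fmap F (fold3 X) x
  - Fmap F (comp (fold2 X) (r_12 X)) x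
  - Fmap F (comp (fold2 X) (r_13 X)) x
  - Fmap F (comp (fold2 X) (r_23 X)) x
  + Fmap F (r_1 X) x + Fmap F (r_2 X) x + Fmap F (r_3 X) x.
End Cross.
Arguments T2_rel {C} F X y.
Arguments alt_map {C} F X x.
Arguments cr2 {C} F A B x.
Arguments cr3 {C} F X Y Z x.
Arguments reduced {C} F.

(* For each summand of X \/ X \/ X let [kill_i] be the endomorphism that sends it
   to zero and fixes the other two.  Since the [kill_i] commute, the maps
   [delta k := id - F(k)] commute as well, and p := delta_1 o delta_2 o delta_3
   lands in cr_3F(X,X,X): each retraction defining cr_3 factors through some
   [kill_i], hence annihilates [delta_i].  Expanding F(nabla^3) o p by
   inclusion-exclusion gives exactly the alternating map of the statement, so the
   image of that map lies in F(nabla^3)(cr_3F).  Conversely, on cr_3F every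
   correction term of the alternating map is one of the retractions defining cr_3,
   so the map agrees with F(nabla^3) there. *)
From mathcomp Require Import all_boot all_algebra.
Set Implicit Arguments. Unset Strict Implicit.
Import GRing.Theory.
Local Open Scope ring_scope.

Section CoproductCalculus.
Variable C : PCat.

Lemma comp_zm (A B D : Ob C) (f : Hom C B D) : comp f (zm A B) = zm A D.
Proof. by rewrite /zm compA (from_z_uniq (comp f (from_z B))). Qed.

Lemma zm_comp (A B D : Ob C) (f : Hom C A B) : comp (zm B D) f = zm A D.
Proof. by rewrite /zm -compA (to_z_uniq (comp (to_z B) f)). Qed.

Lemma comp_copair (A B D E : Ob C) (h : Hom C D E) (f : Hom C A D) (g : Hom C B D) :
  comp h (copair f g) = copair (comp h f) (comp h g).
Proof. by apply: copair_uniq; rewrite -compA ?copair_inl ?copair_inr. Qed.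

Lemma copair_comp_copmap (A B A' B' D : Ob C) (f : Hom C A' D) (g : Hom C B' D)
    (f' : Hom C A A') (g' : Hom C B B') :
  comp (copair f g) (copmap f' g') = copair (comp f f') (comp g g').
Proof. by rewrite /copmap comp_copair !compA copair_inl copair_inr. Qed.

Lemma copmap_comp (A B A' B' A'' B'' : Ob C) (f : Hom C A' A'') (g : Hom C B' B'')
    (f' : Hom C A A') (g' : Hom C B B') :
  comp (copmap f g) (copmap f' g') = copmap (comp f f') (comp g g').
Proof. by rewrite {1}/copmap copair_comp_copmap /copmap -!compA. Qed.

Lemma copair_inl_inr (A B : Ob C) : copair (inl A B) (inr A B) = idm (cop A B).
Proof. by apply/esym/copair_uniq; rewrite comp_idl. Qed.

Lemma copair_zm (A B D : Ob C) : copair (zm A D) (zm B D) = zm (cop A B) D.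
Proof. by apply/esym/copair_uniq; rewrite zm_comp. Qed.

End CoproductCalculus.

Ltac cop_rewrite :=
  repeat progress rewrite ?copmap_comp ?copair_comp_copmap ?comp_copair
    ?copair_inl ?copair_inr ?comp_zm ?zm_comp ?comp_idl ?comp_idr
    ?copair_inl_inr ?copair_zm.

Ltac cop_simpl :=
  rewrite /fold3 /fold2 /r_12 /r_13 /r_23 /r_1 /r_2 /r_3 /ret1 /ret2;
  cop_rewrite; rewrite /copmap; cop_rewrite.

Section Kill.
Variables (C : PCat) (X : Ob C).

Definition kill_1 : Hom C (X3 X) (X3 X) := copmap (copmap (zm X X) (idm X)) (idm X).
Definition kill_2 : Hom C (X3 X) (X3 X) := copmap (copmap (idm X) (zm X X)) (idm X).
Definition kill_3 : Hom C (X3 X) (X3 X) := copmap (idm (cop X X)) (zm X X).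

Lemma kill_12C : comp kill_1 kill_2 = comp kill_2 kill_1.
Proof. by rewrite !copmap_comp !zm_comp !comp_zm !comp_idl. Qed.
Lemma kill_13C : comp kill_1 kill_3 = comp kill_3 kill_1.
Proof. by rewrite !copmap_comp !comp_idl !comp_idr. Qed.
Lemma kill_23C : comp kill_2 kill_3 = comp kill_3 kill_2.
Proof. by rewrite !copmap_comp !comp_idl !comp_idr. Qed.

End Kill.

Section CrossEffectProjector.
Variables (C : PCat) (F : AbFunctor C).

Lemma Fmap0 (A B : Ob C) (f : Hom C A B) : Fmap F f 0 = 0.
Proof. by rewrite -(subrr (0 : Fob F A)) Fmap_sub subrr. Qed.

Lemma Fmap_zm (A B : Ob C) x : reduced F -> Fmap F (zm A B) x = 0.
Proof. by move=> hF; rewrite /zm Fmap_comp (hF (Fmap F (to_z A) x)) Fmap0. Qed.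

Definition delta (A : Ob C) (k : Hom C A A) (y : Fob F A) : Fob F A := y - Fmap F k y.

Lemma Fmap_delta_eq0 (A B : Ob C) (k : Hom C A A) (f : Hom C A B) y :
  comp f k = f -> Fmap F f (delta k y) = 0.
Proof. by move=> fk; rewrite Fmap_sub -Fmap_comp fk subrr. Qed.

Lemma deltaC (A : Ob C) (k k' : Hom C A A) y :
  comp k k' = comp k' k -> delta k (delta k' y) = delta k' (delta k y).
Proof.
move=> kk'; rewrite /delta !Fmap_sub -!Fmap_comp kk'.
by rewrite !opprB !addrA [RHS]addrAC addrAC (addrAC y).
Qed.

Variable X : Ob C.

Definition cr3_proj (x : Fob F (X3 X)) : Fob F (X3 X) :=
  delta (kill_1 X) (delta (kill_2 X) (delta (kill_3 X) x)).

Lemma cr3_proj_cr3 x : cr3 F X X X (cr3_proj x).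
Proof.
rewrite /cr3 /cr2 /cr3_proj; split; [split|split].
- rewrite (deltaC _ (kill_23C X)) (deltaC _ (kill_13C X)); apply: Fmap_delta_eq0.
  by rewrite /kill_3; cop_simpl.
- by apply: Fmap_delta_eq0; rewrite /kill_1; cop_simpl.
- rewrite (deltaC _ (kill_12C X)); apply: Fmap_delta_eq0.
  by rewrite /kill_2; cop_simpl.
- by apply: Fmap_delta_eq0; rewrite /kill_1; cop_simpl.
Qed.

Lemma fold3_cr3_proj x : reduced F -> Fmap F (fold3 X) (cr3_proj x) = alt_map F X x.
Proof.
move=> hF; rewrite /cr3_proj /delta !Fmap_sub -!Fmap_comp.
have -> : comp (comp (comp (fold3 X) (kill_1 X)) (kill_2 X)) (kill_3 X) = zm (X3 X) X.
  by rewrite /kill_1 /kill_2 /kill_3; cop_simpl.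
have -> : comp (comp (fold3 X) (kill_1 X)) (kill_2 X) = r_3 X.
  by rewrite /kill_1 /kill_2; cop_simpl.
have -> : comp (comp (fold3 X) (kill_1 X)) (kill_3 X) = r_2 X.
  by rewrite /kill_1 /kill_3; cop_simpl.
have -> : comp (comp (fold3 X) (kill_2 X)) (kill_3 X) = r_1 X.
  by rewrite /kill_2 /kill_3; cop_simpl.
have -> : comp (fold3 X) (kill_3 X) = comp (fold2 X) (r_12 X) by rewrite /kill_3; cop_simpl.
have -> : comp (fold3 X) (kill_2 X) = comp (fold2 X) (r_13 X) by rewrite /kill_2; cop_simpl.
have -> : comp (fold3 X) (kill_1 X) = comp (fold2 X) (r_23 X) by rewrite /kill_1; cop_simpl.
by rewrite Fmap_zm // subr0 /alt_map !opprB !addrA (ACl (1*2*4*7*3*6*5)%AC).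
Qed.

Lemma alt_map_cr3 x : cr3 F X X X x -> alt_map F X x = Fmap F (fold3 X) x.
Proof.
case=> [[r12x r3x] [r13x r23x]].
have r12E : r_12 X = ret1 (cop X X) X by cop_simpl.
have r3E : r_3 X = ret2 (cop X X) X by cop_simpl.
have r13E : r_13 X = copmap (ret1 X X) (idm X) by cop_simpl.
have r23E : r_23 X = copmap (ret2 X X) (idm X) by cop_simpl.
have r1E : r_1 X = comp (ret1 X X) (r_12 X) by cop_simpl.
have r2E : r_2 X = comp (ret2 X X) (r_12 X) by cop_simpl.
rewrite /alt_map r1E r2E !Fmap_comp r12E r13E r23E r3E r12x r13x r23x r3x !Fmap0.
by rewrite !subr0 !addr0.
Qed.

End CrossEffectProjector.

Theorem proposition2p17 (C : PCat) (F : AbFunctor C) (hF : reduced F) (X : Ob C) :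
  forall y : Fob F X, T2_rel F X y <-> exists x : Fob F (X3 X), y = alt_map F X x.
Proof.
move=> y; split.
  by case=> x [x_cr3 ->]; exists x; rewrite alt_map_cr3.
case=> x ->; exists (cr3_proj x).
by split; [exact: cr3_proj_cr3 | rewrite fold3_cr3_proj].
Qed.
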